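(* Let $A$ be a sparse matrix whose columns are partitioned into consecutive groups $Q_1,\dots,Q_K$, each of width at most $\Delta_W$ (a regular partition of width $\Delta_W$). Let $\tau\in(0,1]$. Let $G$ consist of rows $v_0,\dots,v_{h-1}$ of $A$, merged into one group by the 1-SA algorithm in this order using Jaccard similarity threshold $\tau$; that is, writing $\hat V_i\subseteq\{1,\dots,K\}$ for the support of the quotient row $\hat v_i$ and $P_{i}=\hat V_0\cup\dots\cup \hat V_i$, we have $\mathrm{jaccard}(P_{i-1},\hat V_i)=|P_{i-1}\cap \hat V_i|/|P_{i-1}\cup \hat V_i|\ge\tau$ for every $1\le i\le h-1$. Let $\lambda_0=|\hat V_0|$ be the number of nonzeros of the (quotient) first row and $\lambda=|P_{h-1}|$ the number of nonzeros of the final pattern. If $\lambda\le \lambda_0/(1-\tau/2)$, then the density $\rho_G$ of $G$ after removing empty columns is at least $\tau/(2\Delta_W)$.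
   Context: Quotient row: given the column partition $Q=\{Q_1,\dots,Q_K\}$, the $Q$-quotient of a row $v$ is the binary vector $\hat v\in\{0,1\}^K$ with $\hat v_j=1$ iff $v$ has at least one nonzero entry in a column of $Q_j$. The 1-SA algorithm processes rows in order; when it meets a row not yet assigned to a group it opens a new group whose pattern is that row's quotient; it then scans later unassigned rows and, whenever the merge condition holds between the current pattern and a row's quotient, assigns the row to the group and replaces the pattern by the bitwise OR of the pattern and the row's quotient. Here the merge condition includes that the Jaccard similarity (of supports) between the current pattern and the new quotient row is at least $\tau$. Density of $G$ after removing empty columns: let $C$ be the union of the column groups $Q_j$ with $j\in P_{h-1}$; $\rho_G$ is the number of nonzero entries of $A$ in rows $v_0,\dots,v_{h-1}$ and columns in $C$, divided by $h\cdot|C|$. (For $\Delta_W=1$ this is the density of the $h\times\lambda$ submatrix on the columns containing at least one nonzero of the group.) *)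

From HB Require Import structures.
From mathcomp Require Import all_boot all_order all_algebra.
Set Implicit Arguments. Unset Strict Implicit. Unset Printing Implicit Defensive.
Import Order.TTheory GRing.Theory Num.Theory.
Local Open Scope ring_scope.

(* Column partition encoded by q : 'I_n -> 'I_K  (column j lies in group Q_(q j)). *)

Definition quot_supp (F : zmodType) (m n K : nat) (A : 'M[F]_(m, n))
  (q : 'I_n -> 'I_K) (r : 'I_m) : {set 'I_K} :=
  [set k | [exists j : 'I_n, (q j == k) && (A r j != 0)]].

Definition pattern (F : zmodType) (m n K : nat) (A : 'M[F]_(m, n))
  (q : 'I_n -> 'I_K) (v : nat -> 'I_m) (i : nat) : {set 'I_K} :=
  \bigcup_(l < i.+1) quot_supp A q (v l).

Definition jaccard (R : realFieldType) (K : nat) (S T : {set 'I_K}) : R :=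
  (#|S :&: T|)%:R / (#|S :|: T|)%:R.

Definition group_cols (F : zmodType) (m n K : nat) (A : 'M[F]_(m, n))
  (q : 'I_n -> 'I_K) (v : nat -> 'I_m) (h : nat) : {set 'I_n} :=
  [set j | q j \in pattern A q v h.-1].

Definition group_density (R : realFieldType) (F : zmodType) (m n K : nat)
  (A : 'M[F]_(m, n)) (q : 'I_n -> 'I_K) (v : nat -> 'I_m) (h : nat) : R :=
  (\sum_(i < h) #|[set j in group_cols A q v h | A (v i) j != 0%R]|)%:R
  / (h * #|group_cols A q v h|)%:R.

From HB Require Import structures.
From mathcomp Require Import all_boot all_order all_algebra.
From mathcomp Require Import lra.
Set Implicit Arguments. Unset Strict Implicit. Unset Printing Implicit Defensive.
Import Order.TTheory GRing.Theory Num.Theory.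
Local Open Scope ring_scope.

(* Every row of the group has a large quotient support: for i >= 1 the merge
   condition gives tau |P_(i-1)| <= |P_(i-1) :&: V_i| <= |V_i| with
   |P_(i-1)| >= lambda_0 >= lambda / 2, and V_0 has lambda_0 elements itself.
   Each element of V_i is witnessed by a nonzero of row v_i in its own column
   group, so the h rows have at least h tau lambda / 2 nonzeros in C, whereas C
   is the union of lambda groups of width at most DW. *)

Lemma card_preimset_le (aT rT : finType) (f : aT -> rT) (S : {set rT}) (d : nat) :
  (forall y, (#|[set x | f x == y]| <= d)%N) -> (#|f @^-1: S| <= #|S| * d)%N.
Proof.
move=> fiber_le; rewrite -sum1_card (partition_big f (mem S)); last first.
  by move=> x; rewrite inE.
rewrite -sum_nat_const leq_sum // => y _; apply: leq_trans (fiber_le y).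
rewrite -sum1_card big_mkcond [X in (_ <= X)%N]big_mkcond leq_sum // => x _.
by rewrite !inE; case: (f x == y); rewrite ?andbT ?andbF; case: (f x \in S).
Qed.

Lemma jaccard_mul_card_le (R : realFieldType) (K : nat) (S T : {set 'I_K}) (tau : R) :
  0 <= tau -> tau <= jaccard R S T -> tau * #|S|%:R <= #|T|%:R.
Proof.
move=> tau_ge0; rewrite /jaccard.
have [ST0 | ST_gt0] := posnP #|S :|: T|.
  have /eqP S0 : #|S| == 0%N by rewrite -leqn0 -ST0 subset_leq_card ?subsetUl.
  by rewrite S0 mulr0.
rewrite ler_pdivlMr ?ltr0n // => tau_le.
have S_le : (#|S|%:R : R) <= #|S :|: T|%:R by rewrite ler_nat subset_leq_card ?subsetUl.
have ST_le : (#|S :&: T|%:R : R) <= #|T|%:R by rewrite ler_nat subset_leq_card ?subsetIr.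
apply: le_trans (ler_wpM2l tau_ge0 S_le) _.
exact: le_trans tau_le ST_le.
Qed.

Section MergedGroup.

Variables (F : zmodType) (m n K : nat) (A : 'M[F]_(m, n)) (q : 'I_n -> 'I_K).
Variable v : nat -> 'I_m.

Lemma quot_supp_sub_pattern (i k : nat) :
  (i <= k)%N -> quot_supp A q (v i) \subset pattern A q v k.
Proof. by move=> le_ik; exact: (bigcup_sup (Ordinal (le_ik : (i < k.+1)%N))). Qed.

Lemma card_quot_supp_le_nonzero_cols (r : 'I_m) (S : {set 'I_K}) :
  quot_supp A q r \subset S ->
  (#|quot_supp A q r| <= #|[set j in q @^-1: S | A r j != 0%R]|)%N.
Proof.
move=> sub_S; apply: leq_trans (leq_imset_card q _); apply: subset_leq_card.
apply/subsetP => k k_in; have k_S := subsetP sub_S k k_in.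
move: k_in; rewrite inE => /existsP [j /andP [/eqP qj Arj]].
by apply/imsetP; exists j; rewrite // !inE Arj qj k_S.
Qed.

Lemma card_merged_row_ge (R : realFieldType) (tau : R) (h : nat) :
  0 <= tau -> tau <= 1 ->
  (forall i : nat, (1 <= i < h)%N ->
     tau <= jaccard R (pattern A q v i.-1) (quot_supp A q (v i))) ->
  forall i, (i < h)%N ->
  tau * #|quot_supp A q (v 0%N)|%:R <= #|quot_supp A q (v i)|%:R.
Proof.
move=> tau_ge0 tau_le1 merged [|i] lt_ih; first by rewrite ler_piMl.
have V0_le_P : (#|quot_supp A q (v 0%N)|%:R : R) <= #|pattern A q v i|%:R.
  by rewrite ler_nat subset_leq_card ?quot_supp_sub_pattern.
apply: le_trans (ler_wpM2l tau_ge0 V0_le_P) _.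
exact: jaccard_mul_card_le tau_ge0 (merged i.+1 lt_ih).
Qed.

Lemma group_density_ge (R : realFieldType) (h : nat) (x : R) :
  (0 < h)%N -> (0 < #|group_cols A q v h|)%N ->
  (forall i, (i < h)%N ->
     x <= #|[set j in group_cols A q v h | A (v i) j != 0%R]|%:R) ->
  x / #|group_cols A q v h|%:R <= group_density R A q v h.
Proof.
move=> h_gt0 cols_gt0 row_ge; rewrite /group_density natrM invfM mulrA.
rewrite ler_wpM2r ?invr_ge0 // ler_pdivlMr ?ltr0n // natr_sum.
rewrite mulr_natr -[h in x *+ h]card_ord -sumr_const.
by apply: ler_sum => i _; exact: row_ge.
Qed.

End MergedGroup.

Theorem theorem1 (R : realFieldType) (F : zmodType) (m n K : nat)
  (A : 'M[F]_(m, n)) (q : 'I_n -> 'I_K) (DW : nat) (tau : R)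
  (h : nat) (v : nat -> 'I_m) :
  (* consecutive column groups Q_k = [set j | q j == k], nonempty, width <= DW *)
  {homo q : j1 j2 / (j1 <= j2)%N} ->
  (forall k : 'I_K, exists j : 'I_n, q j = k) ->
  (forall k : 'I_K, (#|[set j | q j == k]| <= DW)%N) ->
  0 < tau <= 1 ->
  (* G consists of h distinct rows v 0, ..., v (h-1) of A, first row nonzero *)
  (0 < h)%N ->
  {in gtn h &, injective v} ->
  (0 < #|quot_supp A q (v 0%N)|)%N ->
  (* 1-SA merge condition *)
  (forall i : nat, (1 <= i < h)%N ->
     tau <= jaccard R (pattern A q v i.-1) (quot_supp A q (v i))) ->
  (* lambda <= lambda_0 / (1 - tau/2) *)
  (#|pattern A q v h.-1|)%:R
    <= (#|quot_supp A q (v 0%N)|)%:R / (1 - tau / 2) ->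
  tau / (2 * DW%:R) <= group_density R A q v h.
Proof.
move=> _ _ width_le /andP [tau_gt0 tau_le1] h_gt0 _ V0_gt0 merged lambda_le.
set lambda := #|pattern A q v h.-1| in lambda_le.
set lambda0 := #|quot_supp A q (v 0%N)| in lambda_le V0_gt0.
set C := group_cols A q v h.
have V_sub i : (i < h)%N -> quot_supp A q (v i) \subset pattern A q v h.-1.
  by move=> lt_ih; apply: quot_supp_sub_pattern; rewrite -ltnS prednK.
have lambda_half_le : (lambda%:R : R) / 2 <= lambda0%:R.
  move: lambda_le; rewrite ler_pdivlMr; last by lra.
  have : (0 : R) <= lambda%:R by []; nra.
have row_ge i : (i < h)%N -> tau * lambda%:R / 2 <= #|[set j in C | A (v i) j != 0]|%:R.
  move=> lt_ih; rewrite -mulrA; apply: le_trans (ler_wpM2l (ltW tau_gt0) lambda_half_le) _.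
  apply: le_trans (card_merged_row_ge (ltW tau_gt0) tau_le1 merged lt_ih) _.
  by rewrite ler_nat card_quot_supp_le_nonzero_cols ?V_sub.
have C_gt0 : (0 < #|C|)%N.
  apply: leq_trans V0_gt0 (leq_trans (card_quot_supp_le_nonzero_cols (V_sub 0%N h_gt0)) _).
  by apply/subset_leq_card/subsetP => j; rewrite !inE => /andP [].
have C_le : (#|C| <= lambda * DW)%N by exact: card_preimset_le.
have DW_gt0 : (0 < DW)%N by move: (leq_trans C_gt0 C_le); rewrite muln_gt0 => /andP [].
apply: le_trans (group_density_ge h_gt0 C_gt0 row_ge).
have C_leR : (#|C|%:R : R) <= lambda%:R * DW%:R by rewrite -natrM ler_nat.
(* tau / (2 DW) = (tau lambda / 2) / (lambda DW) <= (tau lambda / 2) / |C| *)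
rewrite ler_pdivlMr ?ltr0n // mulrAC ler_pdivrMr ?mulr_gt0 ?ltr0n //.
nra.
Qed.
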